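(* Let $\Gamma$ be a tree of diameter four labeled as below and let $\ell=a_1+\cdots+a_n$. Then the Betti numbers of $Q/I_\Gamma$ over $Q$ are $\beta_0^Q=1$, $\beta_1^Q=\ell+n$, and $\beta_i^Q=\binom{\ell+1}{i}+\binom{n}{i}$ for $i>1$. In particular the projective dimension of $Q/I_\Gamma$ is $\max\{\ell+1,n\}$.
   Context: Every tree $\Gamma$ of diameter four (diameter = number of edges in a longest path) can be labeled with vertices $z,x_1,\ldots,x_n,y_{i,j}$ ($1\le i\le n$, $1\le j\le a_i$, integers $a_i\ge0$) so that its edges are $\{z,x_i\}$ and $\{x_i,y_{i,j}\}$. $Q$ is the polynomial ring over a field in these vertices and $I_\Gamma$ is the edge ideal (generated by $zx_i$ and $x_iy_{i,j}$). *)

From HB Require Import structures.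
From mathcomp Require Import all_boot all_order all_algebra.
Set Implicit Arguments. Unset Strict Implicit. Unset Printing Implicit Defensive.
Import Order.TTheory GRing.Theory Num.Theory.

(* Betti numbers of Q/I_G, Q = F[x_v | v in V], I_G the edge ideal of a      *)
(* simple graph G on the finite vertex set V (edge relation E).             *)
(* beta_i = dim_F Tor_i^Q(Q/I_G, F), computed as the homology of the Koszul *)
(* complex K(x_v ; Q/I_G), which is N^V-multigraded with finite-dimensional *)
(* pieces.  In multidegree d, K_i has F-basis the elements  m * e_S  with   *)
(* S a set of vertices, #|S| = i, m = x^(d - 1_S) a standard monomial       *)
(* (i.e. not in I_G, which for a monomial ideal generated by the x_u x_v,   *)
(* E u v, means: no edge u v with both exponents positive).  The Koszul     *)
(* differential is  m e_S |-> sum_{v in S} (-1)^{#{u in S | u < v}} x_v m   *)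
(* e_{S \ v}  (x_v m is zero in Q/I_G iff it is not standard).              *)

Section Koszul.
Variables (V : finType) (E : rel V).

Definition standard (d : V -> nat) : bool :=
  [forall u, forall v, ~~ [&& E u v, 0 < d u & 0 < d v]].

Definition kbasis (d : V -> nat) (S : {set V}) : bool :=
  (S \subset [set v | 0 < d v]) && standard (fun v => d v - (v \in S)).

Definition kcard (i : nat) (d : V -> nat) : nat :=
  #|[set S : {set V} | (#|S| == i) && kbasis d S]|.

(* matrix (row convention, indexed by all subsets of V, zero outside the  *)
(* basis) of the Koszul differential K_i -> K_(i-1) in multidegree d *)
Definition kdiff (F : fieldType) (i : nat) (d : V -> nat)
  : 'M[F]_#|{set V}| :=
  \matrix_(p, q)
    let S := (enum_val p : {set V}) in let T := (enum_val q : {set V}) in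
    if [&& #|S| == i, kbasis d S & kbasis d T] then
      (\sum_(v in S | T == S :\ v)
         (-1) ^+ #|[set u in S | (enum_rank u < enum_rank v)%N]|)%R
    else 0%R.

(* dim_F of the multidegree-d part of H_i(K(x; Q/I_G)) = Tor_i(Q/I_G,F)_d *)
Definition tor_dim (F : fieldType) (i : nat) (d : V -> nat) : nat :=
  kcard i d - \rank (kdiff F i d) - \rank (kdiff F i.+1 d).

Definition betti_partial (F : fieldType) (i N : nat) : nat :=
  \sum_(d : {ffun V -> 'I_N.+1}) tor_dim F i (fun v => d v).

(* beta_i^Q(Q/I_G) = b : the (nonnegative) sum over all multidegrees is b *)
Definition is_betti (F : fieldType) (i b : nat) : Prop :=
  exists N0, forall N, N0 <= N -> betti_partial F i N = b.

Definition is_projdim (F : fieldType) (p : nat) : Prop :=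
  (exists2 b, b != 0 & is_betti F p b) /\ (forall i, p < i -> is_betti F i 0).

End Koszul.

(* The tree with vertices z, x_i (i < n), y_(i,j) (i < n, j < a i) and      *)
(* edges {z, x_i}, {x_i, y_(i,j)}.                                         *)
(*   None            = z                                                    *)
(*   Some (inl i)    = x_i                                                  *)
(*   Some (inr (i,j)) = y_(i,j)                                             *)

Definition tvtx (n : nat) (a : 'I_n -> nat) : finType :=
  option ('I_n + {i : 'I_n & 'I_(a i)})%type.

Definition tree_edge (n : nat) (a : 'I_n -> nat) : rel (tvtx a) :=
  fun u v =>
    match u, v with
    | None, Some (inl _) => true
    | Some (inl _), None => true
    | Some (inl i), Some (inr p) => tag p == i
    | Some (inr p), Some (inl i) => tag p == i
    | _, _ => false
    end.

Arguments tree_edge {n} a u v.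

(* Tor_i^Q(Q/I, F) is the homology of the Koszul complex, which splits by
   multidegree.  If some exponent is >= 2, or is 1 at a vertex with no
   neighbour in the support, that vertex can be toggled in every basis
   element, so only squarefree degrees, i.e. vertex sets U, carry homology.
   For a vertex set U of the tree, toggling a well-chosen vertex gives an
   acyclic matching (discrete Morse theory) with at most one critical cell:
   - if every x_i in U has a leaf y_ij in U, every y in U its parent and z (if
     present) some x_i, the critical cell is U minus its x's;
   - if U is z together with some x_i and no y, the critical cell is U \ {z};
   - otherwise there is none.
   Sets of the first kind are determined by their part W outside the x's, an
   arbitrary subset of {z} u Y other than {z}; this gives binom(l+1, i) - [i = 1]
   classes in degree i.  Sets of the second kind are determined by a nonempty
   set of x's, giving binom(n, i) - [i = 0]. *)

From HB Require Import structures.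
From mathcomp Require Import all_boot all_order all_algebra.
From mathcomp Require Import zify.

Section Koszul.
Set Implicit Arguments. Unset Strict Implicit. Unset Printing Implicit Defensive.
Import GRing.Theory.
Local Open Scope ring_scope.

Variables (V : finType) (E : rel V) (F : fieldType).

Definition kexp (S : {set V}) (v : V) : nat :=
  #|[set u in S | (enum_rank u < enum_rank v)%N]|.

Lemma kexp_setD1_lt (S : {set V}) v w : (enum_rank v < enum_rank w)%N -> v \in S ->
  kexp S w = (kexp (S :\ v) w).+1.
Proof.
move=> vw vS; rewrite /kexp (cardsD1 v) inE vS vw; congr _.+1.
by apply: eq_card => u; rewrite !inE andbA.
Qed.

Lemma kexp_setD1_gt (S : {set V}) v w : (enum_rank v < enum_rank w)%N ->
  kexp (S :\ w) v = kexp S v.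
Proof.
move=> vw; apply: eq_card => u; rewrite !inE.
by case: eqP => [->|_] //=; rewrite ltnNge ltnW // andbF.
Qed.

Lemma koszul_sign_anticomm (S : {set V}) v w : v \in S -> w \in S -> v != w ->
  (-1) ^+ kexp S w * (-1) ^+ kexp (S :\ w) v =
  - ((-1) ^+ kexp S v * (-1) ^+ kexp (S :\ v) w) :> F.
Proof.
wlog vw : v w / (enum_rank v < enum_rank w)%N => [hwlog vS wS neq|vS _ _].
  case: (ltnP (enum_rank v) (enum_rank w)) => [lt|]; first exact: hwlog.
  rewrite leq_eqVlt => /predU1P[/val_inj/enum_rank_inj eq|lt]; first by rewrite eq eqxx in neq.
  by rewrite (hwlog w v) ?opprK // eq_sym.
by rewrite (kexp_setD1_lt vw vS) (kexp_setD1_gt S vw) exprS mulN1r mulNr mulrC.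
Qed.

Lemma sum_antisym (R : zmodType) (I : finType) (P : pred (I * I)) (h : I * I -> R) :
  (forall p, P p -> p.1 != p.2) -> (forall p, P (p.2, p.1) = P p) ->
  (forall p, P p -> h (p.2, p.1) = - h p) -> \sum_(p | P p) h p = 0.
Proof.
move=> Pneq Psym hanti.
rewrite (bigID (fun p : I * I => (enum_rank p.1 < enum_rank p.2)%N)) /=.
have swapK : involutive (fun p : I * I => (p.2, p.1)) by case.
rewrite [X in _ + X](reindex_inj (inv_inj swapK)) /=.
rewrite [X in _ + X](eq_bigl (fun p => P p && (enum_rank p.1 < enum_rank p.2)%N)).
  by rewrite [X in _ + X](eq_bigr (fun p => - h p)) ?sumrN ?addrN // => p /andP[/hanti].
move=> [u v] /=; rewrite (Psym (u, v)); case Puv: (P (u, v)) => //=.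
have neq : enum_rank u != enum_rank v :> nat.
  by apply: contra (Pneq _ Puv) => /eqP/val_inj/enum_rank_inj ->.
by rewrite -leqNgt leq_eqVlt (negbTE neq).
Qed.

Lemma sum_setD1_eq (R : nmodType) (S : {set V}) v (f : V -> R) : v \in S ->
  \sum_(w in S | S :\ v == S :\ w) f w = f v.
Proof.
move=> vS; rewrite (bigD1 v) ?vS ?eqxx //= big1 ?addr0 // => w /andP[/andP[wS /eqP e] wv].
have : v \in S :\ w by rewrite in_setD1 eq_sym wv.
by rewrite -e in_setD1 eqxx.
Qed.

Lemma sum_setD1_eq0 (R : nmodType) (S T : {set V}) (f : V -> R) :
  (forall v, v \in S -> T != S :\ v) -> \sum_(v in S | T == S :\ v) f v = 0.
Proof. by move=> neq; rewrite big1 // => v /andP[/neq/negbTE ->]. Qed.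

Lemma standard_mono (d1 d2 : V -> nat) :
  (forall u, (0 < d2 u)%N -> (0 < d1 u)%N) -> standard E d1 -> standard E d2.
Proof.
move=> supp /forallP st1; apply/forallP => u; apply/forallP => v.
by apply: contra (forallP (st1 u) v) => /and3P[-> /supp -> /supp ->].
Qed.

Lemma setD1_inj_mem (A B : {set V}) u v : v \in A -> v \in B -> u \in B ->
  B :\ u = A :\ v -> A = B.
Proof.
move=> vA vB uB e; have [uv|uv] := eqVneq u v.
  by rewrite -(setD1K vA) -(setD1K vB) -e uv.
have : v \in B :\ u by rewrite in_setD1 eq_sym uv vB.
by rewrite e in_setD1 eqxx.
Qed.

Section FixedDegree.
Variable d : V -> nat.

Lemma kdiffE i (S T : {set V}) : kdiff E F i d (enum_rank S) (enum_rank T) =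
  if [&& #|S| == i, kbasis E d S & kbasis E d T] then
    \sum_(v in S | T == S :\ v) (-1) ^+ kexp S v else 0.
Proof. by rewrite /kdiff mxE !enum_rankK. Qed.

Lemma kbasis_superset (S T : {set V}) : kbasis E d T -> T \subset S ->
  S \subset [set v | (0 < d v)%N] -> kbasis E d S.
Proof.
move=> /andP[_ stT] /subsetP TS Ssupp; rewrite /kbasis Ssupp.
apply: standard_mono stT => u; have /implyP := TS u.
by case: (u \in T); case: (u \in S) => //= _; rewrite subn0 => /leq_trans; apply; apply: leq_subr.
Qed.

Lemma kdiff_mulE i (S T : {set V}) : #|S| = i.+1 -> kbasis E d S -> kbasis E d T ->
  (kdiff E F i.+1 d *m kdiff E F i d) (enum_rank S) (enum_rank T) =
  \sum_(v in S) \sum_(w in S :\ v | T == S :\ v :\ w)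
     (-1) ^+ kexp S v * (-1) ^+ kexp (S :\ v) w.
Proof.
move=> cS bS bT; rewrite mxE (reindex (@enum_rank _)) /=; last first.
  by apply: onW_bij; apply: enum_rank_bij.
have suppS : S \subset [set v | (0 < d v)%N] by case/andP: bS.
rewrite (eq_bigr (fun S' => (\sum_(v in S | S' == S :\ v) (-1) ^+ kexp S v) *
   (\sum_(w in S' | T == S' :\ w) (-1) ^+ kexp S' w))); last first.
  move=> S' _; rewrite !kdiffE cS eqxx bS bT !andbT /=.
  have [/existsP[v /andP[vS /eqP eS']]|/existsPn noS'] := boolP [exists v in S, S' == S :\ v].
    have [/existsP[w /andP[wS' /eqP eT]]|/existsPn noT] := boolP [exists w in S', T == S' :\ w].
      have bS' : kbasis E d S'.
        apply: kbasis_superset bT _ _; first by rewrite eT subsetDl.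
        by rewrite eS'; apply: subset_trans suppS; apply: subsetDl.
      have cS' : #|S :\ v| = i by move: cS; rewrite (cardsD1 v S) vS add1n => -[].
      by rewrite bS' eS' cS' eqxx.
    have -> : \sum_(w in S' | T == S' :\ w) (-1) ^+ kexp S' w = 0 :> F.
      by apply: sum_setD1_eq0 => w wS'; have := noT w; rewrite wS'.
    by rewrite !if_same !mulr0.
  have -> : \sum_(v in S | S' == S :\ v) (-1) ^+ kexp S v = 0 :> F.
    by apply: sum_setD1_eq0 => v vS; have := noS' v; rewrite vS.
  by rewrite !if_same !mul0r.
under eq_bigr do rewrite big_distrl /=.
rewrite (exchange_big_dep (fun v => v \in S)) /=; last by move=> S' v _ /andP[].
apply: eq_bigr => v vS; rewrite -big_distrr /=.
rewrite (eq_bigl (fun S' => S' == S :\ v)) => [|S']; last by rewrite vS.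
by rewrite big_pred1_eq big_distrr.
Qed.

Lemma kdiff_mul i : kdiff E F i.+1 d *m kdiff E F i d = 0.
Proof.
apply/matrixP => p q; rewrite [RHS]mxE -(enum_valK p) -(enum_valK q).
set S := enum_val p; set T := enum_val q.
have [/and3P[/eqP cS bS bT]|nb] := boolP [&& #|S| == i.+1, kbasis E d S & kbasis E d T];
    last first.
  rewrite mxE big1 // => r _; rewrite -(enum_valK r) !kdiffE.
  by case: (#|S| == i.+1) (kbasis E d S) (kbasis E d T) nb => [] [] [] //= _;
    rewrite ?mul0r ?andbF ?mulr0.
rewrite kdiff_mulE // pair_big_dep /=.
apply: sum_antisym => [[v w]|[v w]|[v w]] /=.
- by case/andP=> _ /andP[]; rewrite in_setD1 eq_sym => /andP[].
- rewrite !in_setD1 !setDDl setUC eq_sym.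
  by case: (v \in S); case: (w \in S); case: (w != v); rewrite ?andbF.
- case/andP=> vS /andP[]; rewrite in_setD1 => /andP[wv wS] _.
  by apply: koszul_sign_anticomm; rewrite // eq_sym.
Qed.

Lemma kdiff0 : kdiff E F 0 d = 0.
Proof.
apply/matrixP=> p q; rewrite [RHS]mxE -(enum_valK p) -(enum_valK q) kdiffE.
case: ifP => // /and3P[/eqP/cards0_eq -> _ _].
by rewrite sum_setD1_eq0 // => v; rewrite inE.
Qed.

Definition kcells i : {set {set V}} := [set S : {set V} | (#|S| == i) && kbasis E d S].

Definition kproj i : 'M[F]_#|{set V}| :=
  \sum_(S in kcells i) delta_mx (enum_rank S) (enum_rank S).

Lemma kprojE i (S T : {set V}) :
  kproj i (enum_rank S) (enum_rank T) = ((S == T) && (S \in kcells i))%:R.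
Proof.
rewrite summxE; under eq_bigr => X _ do rewrite mxE !(inj_eq enum_rank_inj).
have [SC|SnC] := boolP (S \in kcells i); last first.
  by rewrite andbF big1 // => X XC; case: eqP => // eSX; rewrite eSX XC in SnC.
rewrite (bigD1 S) //= eqxx big1 ?addr0 => [|X /andP[_ /negbTE XS]].
  by rewrite andbT eq_sym.
by rewrite eq_sym XS.
Qed.

Lemma mxrank_kproj i : (\rank (kproj i) <= kcard E i d)%N.
Proof.
have -> : kcard E i d = (\sum_(S in kcells i) 1)%N by rewrite sum1_card.
apply: (big_ind2 (fun (M : 'M[F]_#|{set V}|) k => \rank M <= k)%N) => //.
- by rewrite mxrank0.
- by move=> A m B k rA rB; apply: leq_trans (mxrank_add A B) (leq_add rA rB).
- by move=> S _; rewrite mxrank_delta.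
Qed.

Lemma kdiff_kproj i : kdiff E F i.+1 d *m kproj i = kdiff E F i.+1 d.
Proof.
apply/matrixP=> p q; rewrite -(enum_valK p) -(enum_valK q).
set S := enum_val p; set T := enum_val q.
rewrite mxE (bigD1 (enum_rank T)) //= big1 ?addr0 => [|r rT]; last first.
  by rewrite -(enum_valK r) kprojE (inj_eq enum_rank_inj) in rT *; rewrite (negbTE rT) mulr0.
rewrite kprojE eqxx /=; have [TC|TnC] := boolP (T \in kcells i); first by rewrite mulr1.
rewrite mulr0 kdiffE; case: ifP => // /and3P[/eqP cS _ bT].
rewrite sum_setD1_eq0 // => v vS; apply: contra TnC => /eqP eT.
by move: cS; rewrite inE bT eT andbT (cardsD1 v) vS add1n => -[->].
Qed.

Lemma kproj_kdiff i : kproj i *m kdiff E F i d = kdiff E F i d.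
Proof.
apply/matrixP=> p q; rewrite -(enum_valK p) -(enum_valK q).
set S := enum_val p; set T := enum_val q.
rewrite mxE (bigD1 (enum_rank S)) //= big1 ?addr0 => [|r rS]; last first.
  by rewrite -(enum_valK r) kprojE (inj_eq enum_rank_inj) eq_sym in rS *;
    rewrite (negbTE rS) mul0r.
rewrite kprojE eqxx /=; have [SC|SnC] := boolP (S \in kcells i); first by rewrite mul1r.
by rewrite mul0r kdiffE; case: ifP => // /and3P[cS bS _]; rewrite inE cS bS in SnC.
Qed.

Lemma rank_kdiff_add i :
  (\rank (kdiff E F i.+1 d) + \rank (kdiff E F i d) <= kcard E i d)%N.
Proof.
have := mxrank_Frobenius (kdiff E F i.+1 d) (kproj i) (kdiff E F i d).
rewrite kdiff_kproj kproj_kdiff kdiff_mul mxrank0 addn0 => /leq_trans; apply.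
exact: mxrank_kproj.
Qed.

(* Discrete Morse theory in the special case where all critical cells have
   the same size: matched pairs bound the ranks of the differentials from
   below, and counting cells then forces equality. *)
Section Matching.
Variables (R : {set {set V}}) (mv : {set V} -> V) (g : {set V} -> nat).
Hypothesis matched : forall r, r \in R ->
  [/\ kbasis E d r, mv r \in r, kbasis E d (r :\ mv r) & r :\ mv r \notin R].
Hypothesis acyclic : forall r r' u, r \in R -> r' \in R -> r != r' -> u \in r' ->
  r' :\ u = r :\ mv r -> (g r < g r')%N.

Definition critical (S : {set V}) :=
  [&& kbasis E d S, S \notin R & S \notin [set r :\ mv r | r in R]].

Lemma matching_inj : {in R &, injective (fun r => r :\ mv r)}.
Proof.
move=> r r' rR r'R /= e; apply/eqP/negPn/negP => ne.
have [_ m' _ _] := matched r'R; have [_ m _ _] := matched rR.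
have r'r : r' != r by rewrite eq_sym.
have := ltn_trans (acyclic rR r'R ne m' (esym e)) (acyclic r'R rR r'r m e).
by rewrite ltnn.
Qed.

(* The rows of the matched cells r, ordered by g, form a triangular system:
   column r :\ mv r meets no row r' of larger g. *)
Lemma rank_kdiff_matching i :
  (#|[set r in R | #|r| == i]| <= \rank (kdiff E F i d))%N.
Proof.
set Ri := [set r in R | #|r| == i].
pose rho (b : 'I_#|Ri|) := enum_rank (enum_val b).
apply: leq_trans (mxrankS (rowsub_sub rho (kdiff E F i d))).
rewrite row_leq_rank; apply/inj_row_free => x x0.
apply/rowP=> b0; rewrite mxE; apply/eqP/negPn/negP => xb0.
pose b := [arg max_(b > b0 | x 0 b != 0) g (enum_val b)].
have [xb bmax] : x 0 b != 0 /\ forall b', x 0 b' != 0 -> (g (enum_val b') <= g (enum_val b))%N.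
  by rewrite /b; case: arg_maxnP.
set r := enum_val b.
have /setIdP[rR /eqP cr] : r \in Ri := enum_valP b.
have [br mr bmr _] := matched rR.
have := congr1 (fun y : 'rV[F]_#|{set V}| => y 0 (enum_rank (r :\ mv r))) x0.
rewrite !mxE (bigD1 b) //= big1 ?addr0.
  rewrite mxE kdiffE cr eqxx br bmr sum_setD1_eq //.
  by move/eqP; rewrite mulf_eq0 (negbTE xb) signr_eq0.
move=> b' b'b; rewrite mxE kdiffE.
have [->|xb'] := eqVneq (x 0 b') 0; first by rewrite mul0r.
case: ifP => _; last by rewrite mulr0.
rewrite sum_setD1_eq0 ?mulr0 // => u ub'; apply/negP => /eqP e.
have /setIdP[r'R _] : enum_val b' \in Ri := enum_valP b'.
have rr' : r != enum_val b' by apply: contra b'b => /eqP/enum_val_inj ->.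
by have := acyclic rR r'R rr' ub' (esym e); rewrite ltnNge bmax.
Qed.

Lemma kcard_matching i : kcard E i d =
  (#|[set r in R | #|r| == i]| + #|[set r in R | #|r| == i.+1]| +
   #|[set S : {set V} | (#|S| == i) && critical S]|)%N.
Proof.
set C := [set r :\ mv r | r in R].
rewrite /kcard; set B := [set S : {set V} | (#|S| == i) && kbasis E d S].
rewrite -(cardsID R B) -(cardsID C (B :\: R)) addnA; congr (_ + _ + _)%N.
- apply: eq_card => S; rewrite !inE.
  by case SR: (S \in R); rewrite ?andbF //; have [-> _ _ _] := matched SR; rewrite !andbT.
- set R1 := [set r in R | #|r| == i.+1].
  have inj : {in R1 &, injective (fun r => r :\ mv r)}.
    by move=> r r' /setIdP[rR _] /setIdP[r'R _]; apply: matching_inj.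
  rewrite -(card_in_imset inj); apply: eq_card => S; apply/idP/imsetP.
    case/setIP => /setDP[/setIdP[/eqP cS _] _] /imsetP[r rR eS].
    have [_ mr _ _] := matched rR.
    by exists r => //; rewrite inE rR (cardsD1 (mv r)) mr -eS cS add1n eqxx.
  case=> r /setIdP[rR /eqP cr] ->; have [_ mr br nR] := matched rR.
  rewrite !inE nR br andbT (imset_f (fun r => r :\ mv r) rR) andbT.
  by move: cr; rewrite (cardsD1 (mv r)) mr add1n => -[->]; rewrite eqxx.
- by apply: eq_card => S; rewrite !inE /critical; case: (S \in C); case: (S \in R);
    rewrite ?andbF ?andbT.
Qed.

Variable c0 : nat.
Hypothesis critical_card : forall S, critical S -> #|S| = c0.

Theorem tor_dim_matching i : tor_dim E F i d = #|[set S : {set V} | (#|S| == i) && critical S]|.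
Proof.
pose Rc j := #|[set r in R | #|r| == j]|.
pose cr j := #|[set S : {set V} | (#|S| == j) && critical S]|.
have cr_c0 j : cr j != 0%N -> j = c0.
  rewrite -lt0n card_gt0 => /set0Pn[S /setIdP[/eqP <- /critical_card]] //.
have rank_le j : (\rank (kdiff E F j d) <= Rc j)%N.
  case: j => [|k]; first by rewrite kdiff0 mxrank0.
  have [crk|crk] := eqVneq (cr k) 0%N.
    have := rank_kdiff_add k; rewrite kcard_matching -/(cr k) crk.
    by have := rank_kdiff_matching k; rewrite -/(Rc k) -/(Rc k.+1); lia.
  have crk1 : cr k.+1 = 0%N.
    by apply/eqP; apply: contraT => /cr_c0 e1; have := cr_c0 _ crk; lia.
  have := rank_kdiff_add k.+1; rewrite kcard_matching -/(cr k.+1) crk1.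
  by have := rank_kdiff_matching k.+2; rewrite -/(Rc k.+1) -/(Rc k.+2); lia.
have rankE j : \rank (kdiff E F j d) = Rc j.
  by apply/eqP; rewrite eqn_leq rank_le rank_kdiff_matching.
by rewrite /tor_dim kcard_matching !rankE /Rc /cr; lia.
Qed.

End Matching.

(* Matchings S <-> S :\ w S by a pivot w S that is unchanged by toggling it. *)
Section Toggle.
Variables (Q : pred {set V}) (w : {set V} -> V) (g : {set V} -> nat).
Hypothesis toggle_del : forall S, kbasis E d S -> Q S -> w S \in S ->
  [/\ kbasis E d (S :\ w S), Q (S :\ w S) & w (S :\ w S) = w S].
Hypothesis toggle_add : forall S, kbasis E d S -> Q S -> w S \notin S ->
  [/\ kbasis E d (w S |: S), Q (w S |: S) & w (w S |: S) = w S].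
Hypothesis toggle_acyclic : forall r r', kbasis E d r -> Q r -> w r \in r ->
  kbasis E d r' -> Q r' -> w r' \in r' -> r :\ w r \subset r' -> w r != w r' ->
  (g r < g r')%N.

Let R := [set S | [&& kbasis E d S, Q S & w S \in S]].

Lemma toggle_matched r : r \in R ->
  [/\ kbasis E d r, w r \in r, kbasis E d (r :\ w r) & r :\ w r \notin R].
Proof.
rewrite inE => /and3P[br Qr wr]; have [br' _ wr'] := toggle_del br Qr wr.
by split => //; rewrite inE wr' !inE eqxx !andbF.
Qed.

Lemma toggle_acyclic_matching r r' u : r \in R -> r' \in R -> r != r' -> u \in r' ->
  r' :\ u = r :\ w r -> (g r < g r')%N.
Proof.
rewrite !inE => /and3P[br Qr wr] /and3P[br' Qr' wr'] rr' ur' e.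
apply: toggle_acyclic => //; first by rewrite -e subsetDl.
by apply: contra rr' => /eqP ww; rewrite (setD1_inj_mem wr _ ur' e) // ww.
Qed.

Lemma critical_toggle S : critical R w S = kbasis E d S && ~~ Q S.
Proof.
rewrite /critical; case bS: (kbasis E d S) => //=.
have [QS|nQS] /= := boolP (Q S); last first.
  rewrite inE bS (negbTE nQS) /=; apply/imsetP => -[r]; rewrite inE => /and3P[br Qr wr] eS.
  by have [_ + _] := toggle_del br Qr wr; rewrite -eS (negbTE nQS).
apply/negP => /andP[]; rewrite inE bS QS /= => wS; apply/negP/negPn/imsetP.
have [bS' QS' wS'] := toggle_add bS QS wS.
exists (w S |: S); first by rewrite inE bS' QS' wS' setU11.
by rewrite wS' setU1K.
Qed.

Lemma tor_dim_toggle c0 : (forall S, kbasis E d S -> ~~ Q S -> #|S| = c0) ->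
  forall i, tor_dim E F i d = #|[set S : {set V} | [&& #|S| == i, kbasis E d S & ~~ Q S]]|.
Proof.
move=> card_c0 i; rewrite (@tor_dim_matching R w g toggle_matched toggle_acyclic_matching c0).
  by apply: eq_card => S; rewrite !inE critical_toggle.
by move=> S; rewrite critical_toggle => /andP[/card_c0].
Qed.

Lemma tor_dim_toggle_eq0 : (forall S, kbasis E d S -> Q S) -> forall i, tor_dim E F i d = 0%N.
Proof.
move=> allQ i; have nQ S : kbasis E d S && ~~ Q S = false.
  by case: (boolP (kbasis E d S)) => // /allQ ->.
rewrite (@tor_dim_toggle 0) => [|S bS]; last by have := nQ S; rewrite bS => /negbFE ->.
by apply: eq_card0 => S; rewrite !inE nQ andbF.
Qed.

Lemma tor_dim_toggle_unique S0 : (forall S, kbasis E d S && ~~ Q S = (S == S0)) ->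
  forall i, tor_dim E F i d = (#|S0| == i).
Proof.
move=> crit i; rewrite (@tor_dim_toggle #|S0|) => [|S bS nQS]; last first.
  by have /eqP -> := etrans (esym (crit S)) (introT andP (conj bS nQS)).
have -> : [set S : {set V} | [&& #|S| == i, kbasis E d S & ~~ Q S]] =
    if #|S0| == i then [set S0] else set0.
  apply/setP => S; rewrite !inE crit andbC.
  by case: (eqVneq S S0) => [->|ne]; case: ifP => h; rewrite ?inE ?eqxx ?h ?(negbTE ne).
by case: ifP; rewrite ?cards1 ?cards0.
Qed.

End Toggle.

Lemma tor_dim_eq0_vertex v : (0 < d v)%N ->
  (1 < d v)%N \/ (forall u, E v u || E u v -> d u = 0%N) ->
  forall i, tor_dim E F i d = 0%N.
Proof.
move=> dv dv_free; apply: (@tor_dim_toggle_eq0 predT (fun _ => v) (fun _ => 0%N)) => //.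
- move=> S /andP[Ssupp stS] _ vS; split => //; rewrite /kbasis.
  rewrite (subset_trans (subsetDl S [set v])) //=.
  case: dv_free => [dv2|vfree].
    apply: standard_mono stS => u; rewrite in_setD1.
    by case: eqVneq => [->|_] /=; rewrite ?vS // subn0 subn1 => _; rewrite -subn1 subn_gt0.
  apply/forallP => u; apply/forallP => u'; apply/negP => /and3P[e uS u'S].
  have off t : t != v -> (0 < d t - (t \in S :\ v))%N -> (0 < d t - (t \in S))%N.
    by move=> tv; rewrite in_setD1 tv.
  have [uv|uv] := eqVneq u v; first by move: u'S; rewrite vfree ?subn0 // -uv e.
  have [u'v|u'v] := eqVneq u' v; first by move: uS; rewrite vfree ?subn0 // -u'v e orbT.
  by move/forallP: stS => /(_ u)/forallP/(_ u'); rewrite e (off _ uv uS) (off _ u'v u'S).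
- move=> S bS _ vS; split => //; have /andP[Ssupp _] := bS.
  by apply: kbasis_superset bS (subsetUr _ _) _; rewrite subUset sub1set inE dv.
- by move=> r r' _ _ _ _ _ _ _; rewrite eqxx.
Qed.

End FixedDegree.

Lemma eq_kbasis (d1 d2 : V -> nat) : d1 =1 d2 -> kbasis E d1 =1 kbasis E d2.
Proof.
move=> e S; rewrite /kbasis /standard; congr (_ && _).
  by rewrite (_ : [set v | _] = [set v | (0 < d2 v)%N]) //; apply/setP => v; rewrite !inE e.
by apply: eq_forallb => u; apply: eq_forallb => v; rewrite /= !e.
Qed.

Lemma eq_tor_dim (d1 d2 : V -> nat) i : d1 =1 d2 -> tor_dim E F i d1 = tor_dim E F i d2.
Proof.
move=> e; have eb := eq_kbasis e.
have ek j : kdiff E F j d1 = kdiff E F j d2 by apply/matrixP => p q; rewrite /kdiff !mxE !eb.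
by rewrite /tor_dim /kcard !ek; congr (_ - _ - _)%N; apply: eq_card => S; rewrite !inE eb.
Qed.

Definition setdeg (U : {set V}) : V -> nat := fun v => v \in U.

Lemma betti_partial_setdeg i N : (0 < N)%N ->
  betti_partial E F i N = (\sum_(U : {set V}) tor_dim E F i (setdeg U))%N.
Proof.
move=> N0; rewrite /betti_partial.
rewrite (bigID (fun d : {ffun V -> 'I_N.+1} => [forall v, (d v <= 1)%N])) /=.
rewrite [X in (_ + X)%N]big1 ?addn0 => [|d /forallPn[v]]; last first.
  by rewrite -ltnNge => dv; apply: (tor_dim_eq0_vertex (ltnW dv)); left.
pose h (U : {set V}) : {ffun V -> 'I_N.+1} := [ffun v => inord (v \in U)].
have hE U v : nat_of_ord (h U v) = (v \in U) by rewrite ffunE inordK //; case: (v \in U).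
rewrite (reindex_onto h (fun d => [set v | (0 < d v)%N])) => [|d /forallP d01]; last first.
  apply/ffunP => v; apply/val_inj; rewrite /= hE inE.
  by move: (d01 v); case: (nat_of_ord (d v)) => [|[|]].
rewrite (eq_bigl xpredT) => [|U]; last first.
  apply/andP; split; first by apply/forallP => v; rewrite hE; case: (v \in U).
  by apply/eqP/setP => v; rewrite inE hE; case: (v \in U).
by apply: eq_bigr => U _; apply: eq_tor_dim => v; rewrite hE.
Qed.

Definition stable (A : {set V}) := [forall u, forall v, ~~ [&& E u v, u \in A & v \in A]].

Lemma stableU1 v (A : {set V}) : ~~ E v v ->
  (forall u, u \in A -> ~~ E v u && ~~ E u v) -> stable A -> stable (v |: A).
Proof.
move=> nEvv vA /forallP stA; apply/forallP => u; apply/forallP => u'.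
rewrite !in_setU1; case: eqVneq => [->|uv]; case: eqVneq => [->|u'v] //=.
- by rewrite (negbTE nEvv).
- by case: (boolP (u' \in A)) => [/vA/andP[/negbTE -> _]|]; rewrite ?andbF.
- by case: (boolP (u \in A)) => [/vA/andP[_ /negbTE ->]|]; rewrite ?andbF.
- exact: forallP (stA u) u'.
Qed.

Lemma supp_setdeg (U : {set V}) : [set v | (0 < setdeg U v)%N] = U.
Proof. by apply/setP => v; rewrite inE /setdeg; case: (v \in U). Qed.

Lemma kbasis_setdeg (U S : {set V}) :
  kbasis E (setdeg U) S = (S \subset U) && stable (U :\: S).
Proof.
rewrite /kbasis supp_setdeg; congr (_ && _).
apply: eq_forallb => u; apply: eq_forallb => v; rewrite !inE /setdeg.
by case: (u \in U); case: (u \in S); case: (v \in U); case: (v \in S); rewrite ?andbF.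
Qed.

Lemma kbasis_setdeg_setD1 (U S : {set V}) v : kbasis E (setdeg U) S -> v \in S -> ~~ E v v ->
  (forall u, u \in U -> E v u || E u v -> u \in S) -> kbasis E (setdeg U) (S :\ v).
Proof.
rewrite !kbasis_setdeg => /andP[SU stS] vS nEvv vnbr.
rewrite (subset_trans (subsetDl S [set v])) //=.
have -> : U :\: (S :\ v) = v |: (U :\: S).
  apply/setP => u; rewrite !inE; case: eqVneq => [->|] //=.
  by rewrite (subsetP SU _ vS).
apply: stableU1 => // u; rewrite inE => /andP[uS uU]; rewrite -negb_or.
by apply: contra uS => /(vnbr _ uU).
Qed.

Lemma kbasis_setdeg_superset (U S T : {set V}) : kbasis E (setdeg U) T -> T \subset S ->
  S \subset U -> kbasis E (setdeg U) S.
Proof. by move=> bT TS SU; apply: kbasis_superset bT TS _; rewrite supp_setdeg. Qed.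

Lemma stable_edgeF (A : {set V}) u v : stable A -> E u v -> u \in A -> v \notin A.
Proof. by move=> /forallP/(_ u)/forallP/(_ v) + e uA; rewrite e uA. Qed.

End Koszul.

Lemma card_draws_setD1 (T : finType) (B W0 : {set T}) k : W0 \subset B ->
  #|[set W : {set T} | W \subset B & #|W| == k] :\ W0| = 'C(#|B|, k) - (#|W0| == k).
Proof. by move=> W0B; rewrite -cards_draws [in RHS](cardsD1 W0) inE W0B addKn. Qed.

Section Tree.
Set Implicit Arguments. Unset Strict Implicit. Unset Printing Implicit Defensive.

Variables (F : fieldType) (n : nat) (a : 'I_n -> nat).
Local Notation T := (tvtx a).
Local Notation E := (tree_edge a).
Local Notation tdim i U := (tor_dim E F i (setdeg U)).
Local Notation l := (\sum_(j < n) a j)%N.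

Definition vz : T := None.
Definition vx (i : 'I_n) : T := Some (inl i).
Definition vy (p : {i : 'I_n & 'I_(a i)}) : T := Some (inr p).

Variant tvtx_spec : T -> Type :=
| TvtxZ : tvtx_spec vz
| TvtxX i : tvtx_spec (vx i)
| TvtxY p : tvtx_spec (vy p).

Lemma tvtxP v : tvtx_spec v.
Proof. by case: v => [[i|p]|]; constructor. Qed.

Lemma tree_edgeC u v : E u v = E v u.
Proof. by case: (tvtxP u) => *; case: (tvtxP v). Qed.

Lemma tree_edge_irr v : ~~ E v v.
Proof. by case: (tvtxP v). Qed.

Definition xset : {set T} := [set v : T | if v is Some (inl _) then true else false].

Lemma xset_vz : (vz \in xset) = false. Proof. by rewrite inE. Qed.
Lemma xset_vx i : vx i \in xset. Proof. by rewrite inE. Qed.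
Lemma xset_vy p : (vy p \in xset) = false. Proof. by rewrite inE. Qed.

Definition leafy (U : {set T}) : bool :=
  [&& [forall p, (vy p \in U) ==> (vx (tag p) \in U)],
      [forall i, (vx i \in U) ==> [exists p, (tag p == i) && (vy p \in U)]]
    & (vz \in U) ==> [exists i, vx i \in U]].

Definition zstar (U : {set T}) : bool :=
  [&& vz \in U, [exists i, vx i \in U] & [forall p, vy p \notin U]].

Lemma tor_dim_isolated i (U : {set T}) v : v \in U -> (forall w, E v w -> w \notin U) ->
  tdim i U = 0.
Proof.
move=> vU viso; apply: (tor_dim_eq0_vertex F (v := v)); first by rewrite /setdeg vU.
by right => u; rewrite (tree_edgeC u) orbb => /viso /negbTE; rewrite /setdeg => ->.
Qed.

Lemma tor_dim_mixed i (U : {set T}) j p : vz \in U -> vx j \in U ->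
  (forall q, tag q = j -> vy q \notin U) -> vy p \in U -> vx (tag p) \in U -> tdim i U = 0.
Proof.
move=> zU xjU noleaf ypU xpU.
pose w (S : {set T}) := if vz \in S then vx j else vy p.
have wU (S : {set T}) : w S \in U by rewrite /w; case: ifP.
have wD1 (S : {set T}) : w (S :\ w S) = w S by rewrite /w in_setD1; case: (vz \in S).
have wU1 (S : {set T}) : w (w S |: S) = w S by rewrite /w in_setU1; case: (vz \in S).
apply: (tor_dim_toggle_eq0 F (Q := predT) (w := w) (g := fun S => vz \in S : nat)) => //.
- move=> S bS _ wS; split => //; have := bS; rewrite kbasis_setdeg => /andP[SU stS].
  apply: kbasis_setdeg_setD1 => //; first exact: tree_edge_irr.
  move=> u uU; rewrite tree_edgeC orbb; move: wS; rewrite /w.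
  case zS: (vz \in S) => wS; case: (tvtxP u) uU => [|k|q] //= uU.
  + by move/eqP/noleaf; rewrite uU.
  + move/eqP=> <-; apply: contraT => xpS.
    have := stable_edgeF (u := vz) (v := vx (tag p)) stS isT.
    by rewrite !inE zS zU xpS xpU => /(_ isT).
- move=> S bS _ wS; split; rewrite ?wU1 //.
  have := bS; rewrite kbasis_setdeg => /andP[SU _].
  by apply: kbasis_setdeg_superset bS (subsetUr _ _) _; rewrite subUset sub1set wU.
- move=> r r' _ _ _ _ _ _ sub.
  have zr_r' : vz \in r -> vz \in r'.
    by move=> zr; apply: (subsetP sub); rewrite in_setD1 zr andbT /w zr.
  rewrite /w; case: (boolP (vz \in r)) => [/zr_r' ->|_]; first by rewrite eqxx.
  by case: (vz \in r'); rewrite ?eqxx.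
Qed.

Lemma tor_dim_zstar (U : {set T}) i : zstar U -> tdim i U = (#|U :\ vz| == i).
Proof.
case/and3P => zU /existsP[m xmU] /forallP noy.
apply: (tor_dim_toggle_unique F (Q := fun S => vz \in S) (w := fun=> vx m) (g := fun=> 0%N)).
- move=> S bS zS xmS; split; rewrite ?in_setD1 ?zS //.
  apply: kbasis_setdeg_setD1 => // u uU; rewrite tree_edgeC orbb.
  by case: (tvtxP u) uU => [|k|q] //=; rewrite (negbTE (noy q)).
- move=> S bS zS xmS; split; rewrite ?in_setU1 ?zS ?orbT //.
  have := bS; rewrite kbasis_setdeg => /andP[SU _].
  by apply: kbasis_setdeg_superset bS (subsetUr _ _) _; rewrite subUset sub1set xmU.
- by move=> r r' _ _ _ _ _ _ _; rewrite eqxx.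
move=> S; apply/idP/eqP => [|->].
  rewrite kbasis_setdeg => /andP[/andP[SU stS] zS]; apply/setP => v; rewrite in_setD1.
  case: (tvtxP v) => [|k|q] /=; first exact/negbTE.
    apply/idP/idP => [/(subsetP SU)//|xkU]; apply: contraT => xkS.
    have := stable_edgeF (u := vz) (v := vx k) stS isT.
    by rewrite !inE zS zU xkS xkU => /(_ isT).
  by rewrite (negbTE (noy q)); apply: contraNF (noy q) => /(subsetP SU).
rewrite kbasis_setdeg subsetDl !inE eqxx andbT /=.
apply/forallP => u; apply/forallP => v; rewrite !inE.
by case: (eqVneq u vz) => [->|]; case: (eqVneq v vz) => [->|] //=; rewrite ?andNb ?andbF.
Qed.

Definition top_x (S : {set T}) : option 'I_n :=
  [pick i | (vx i \in S) && [forall j, (vx j \in S) ==> (j <= i)%N]].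

Variant top_x_spec (S : {set T}) : option 'I_n -> Prop :=
| TopX i of vx i \in S & (forall j, vx j \in S -> (j <= i)%N) : top_x_spec S (Some i)
| NoX of (forall i, vx i \notin S) : top_x_spec S None.

Lemma top_xP S : top_x_spec S (top_x S).
Proof.
rewrite /top_x; case: pickP => [i /andP[xiS /forallP imax]|nox].
  by constructor => // j; apply/implyP.
constructor => i; apply/negP => xiS.
have [j xjS jmax] := @arg_maxnP _ i (fun j => vx j \in S) (fun j => nat_of_ord j) xiS.
by have := nox j; rewrite xjS; case: forallP => // -[] k; apply/implyP/jmax.
Qed.

Lemma eq_top_x (S S' : {set T}) : (forall i, (vx i \in S) = (vx i \in S')) ->
  top_x S = top_x S'.
Proof.
move=> e; apply: eq_pick => i /=; rewrite e; congr (_ && _).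
by apply: eq_forallb => j; rewrite e.
Qed.

Section Leafy.
Variable U : {set T}.
Hypothesis leafyU : leafy U.

Definition leaf_of j : T :=
  if [pick p | (tag p == j) && (vy p \in U)] is Some p then vy p else vz.

Definition leaf_pivot S := oapp leaf_of vz (top_x S).

Lemma leaf_pivotP (S : {set T}) : S \subset U -> top_x S != None ->
  exists2 p, leaf_pivot S = vy p & [/\ top_x S = Some (tag p), vx (tag p) \in S & vy p \in U].
Proof.
rewrite /leaf_pivot /leaf_of; case: top_xP => //= j xjS _ SU _.
case: pickP => [p /andP[/eqP tp ypU]|none]; first by exists p; rewrite ?tp.
case/and3P: leafyU => _ /forallP/(_ j)/implyP/(_ (subsetP SU _ xjS)) /existsP[p].
by rewrite none.
Qed.

Lemma leafy_critical S : kbasis E (setdeg U) S && (top_x S == None) = (S == U :\: xset).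
Proof.
case/and3P: leafyU => /forallP yU_xU _ zU_xU.
apply/idP/eqP => [|->]; last first.
  rewrite kbasis_setdeg subsetDl /=; apply/andP; split.
    apply/forallP => u; apply/forallP => v; rewrite !inE.
    by case: (tvtxP u); case: (tvtxP v) => * /=; rewrite ?andNb ?andbF.
  by case: top_xP => // j; rewrite !inE.
rewrite kbasis_setdeg => /andP[/andP[SU stS] /eqP tN].
have nox k : vx k \notin S by case: top_xP tN.
have in_nbr u v : E u v -> v \in U -> v \notin S -> u \in U -> u \in S.
  move=> e vU vS uU; apply: contraT => uS.
  by have := stable_edgeF stS e; rewrite !inE uS uU vS vU => /(_ isT).
apply/setP => v; rewrite !inE; case: (tvtxP v) => [|k|q] /=.
- apply/idP/idP => [/(subsetP SU)//|zU].
  by have /existsP[k xkU] := implyP zU_xU zU; apply: (in_nbr _ (vx k)).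
- exact/negbTE.
- apply/idP/idP => [/(subsetP SU)//|yqU].
  by apply: (in_nbr _ (vx (tag q))) => //; [rewrite tree_edgeC /= | apply: (implyP (yU_xU q))].
Qed.

(* Toggle the leaf pivot of the x_i of largest index in S; that index can only
   increase along a path of the matching. *)
Lemma tor_dim_leafy i : tdim i U = (#|U :\: xset| == i).
Proof.
pose g S := oapp (@nat_of_ord n) 0%N (top_x S).
have top_x_y S p : top_x (S :\ vy p) = top_x S /\ top_x (vy p |: S) = top_x S.
  by split; apply: eq_top_x => j; rewrite ?in_setD1 ?in_setU1.
apply: (tor_dim_toggle_unique F (Q := fun S => top_x S != None) (w := leaf_pivot) (g := g)).
- move=> S bS QS; have := bS; rewrite kbasis_setdeg => /andP[SU _].
  have [p wSp [_ xpS ypU]] := leaf_pivotP SU QS; rewrite wSp => ypS.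
  have [tD _] := top_x_y S p.
  split; [|by rewrite tD|by rewrite /leaf_pivot tD; exact: wSp].
  apply: kbasis_setdeg_setD1 => // u uU; rewrite tree_edgeC orbb.
  by case: (tvtxP u) => //= k /eqP <-.
- move=> S bS QS; have := bS; rewrite kbasis_setdeg => /andP[SU _].
  have [p wSp [_ _ ypU]] := leaf_pivotP SU QS; rewrite wSp => _.
  have [_ tU] := top_x_y S p.
  split; [|by rewrite tU|by rewrite /leaf_pivot tU; exact: wSp].
  by apply: kbasis_setdeg_superset bS (subsetUr _ _) _; rewrite subUset sub1set ypU.
- move=> r r' br Qr _ br' Qr' _ sub.
  have := br; have := br'; rewrite !kbasis_setdeg => /andP[r'U _] /andP[rU _].
  have [p wrp [trp xpr _]] := leaf_pivotP rU Qr.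
  have [p' wrp' [trp' _ _]] := leaf_pivotP r'U Qr'.
  have xpr' : vx (tag p) \in r' by apply: (subsetP sub); rewrite wrp in_setD1 xpr.
  rewrite /g trp trp' /= ltn_neqAle => ww'; apply/andP; split.
    by apply: contra ww' => /eqP/val_inj e; rewrite /leaf_pivot trp trp' e.
  by case: top_xP trp' => // j _ jmax [<-]; apply: jmax.
by move=> S; rewrite negbK leafy_critical.
Qed.

End Leafy.

Lemma tor_dim_tree i (U : {set T}) :
  tdim i U = (leafy U && (#|U :\: xset| == i) + zstar U && (#|U :\ vz| == i))%N.
Proof.
have [lU|nlU] := boolP (leafy U).
  suff -> : zstar U = false by rewrite tor_dim_leafy // addn0.
  apply/negP => /and3P[_ /existsP[k xkU] /forallP noy].
  case/and3P: lU => _ /forallP/(_ k); rewrite xkU => /existsP[p /andP[_ ypU]] _.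
  by have := noy p; rewrite ypU.
have [zsU|nzsU] := boolP (zstar U); first by rewrite tor_dim_zstar.
have [yU_xU|] := boolP [forall p, (vy p \in U) ==> (vx (tag p) \in U)]; last first.
  case/forallPn => p; rewrite negb_imply => /andP[ypU xpU].
  by apply: (tor_dim_isolated i ypU) => v; case: (tvtxP v) => //= k /eqP <-.
have [zU_xU|] := boolP ((vz \in U) ==> [exists k, vx k \in U]); last first.
  rewrite negb_imply => /andP[zU /existsPn nox].
  by apply: (tor_dim_isolated i zU) => v; case: (tvtxP v) => //= k _; apply: nox.
move: nlU; rewrite /leafy yU_xU zU_xU andbT /= => /forallPn[j].
rewrite negb_imply => /andP[xjU /existsPn noleaf].
have noleaf' q : tag q = j -> vy q \notin U by move=> tq; have := noleaf q; rewrite tq eqxx.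
have [zU|nzU] := boolP (vz \in U); last first.
  apply: (tor_dim_isolated i xjU) => v.
  by case: (tvtxP v) => //= q /eqP; apply: noleaf'.
have [p ypU] : exists p, vy p \in U.
  move: nzsU; rewrite /zstar zU (introT existsP (ex_intro _ j xjU)) /=.
  by case/forallPn => p /negPn; exists p.
by rewrite addn0; apply: (tor_dim_mixed i zU xjU noleaf' ypU (implyP (forallP yU_xU p) ypU)).
Qed.

Lemma xsetE : xset = vx @: [set: 'I_n].
Proof.
apply/setP => v; rewrite inE; case: (tvtxP v) => [|i|p] /=.
- by apply/esym/imsetP => -[].
- by rewrite imset_f.
- by apply/esym/imsetP => -[].
Qed.

Lemma card_xset : #|xset| = n.
Proof. by rewrite xsetE card_imset ?cardsT ?card_ord // => i j [->]. Qed.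

Lemma card_not_xset : #|~: xset| = l.+1.
Proof.
have -> : ~: xset = vz |: vy @: [set: {i : 'I_n & 'I_(a i)}].
  apply/setP => v; rewrite !inE; case: (tvtxP v) => [|i|p] /=; rewrite ?eqxx //.
    by apply/esym/imsetP => -[].
  by rewrite imset_f.
rewrite cardsU1 card_imset => [|p q [->] //].
rewrite cardsT card_tagged sumnE big_map big_enum /=.
have -> : vz \notin vy @: [set: {i : 'I_n & 'I_(a i)}] by apply/imsetP => -[].
by rewrite add1n; congr _.+1; apply: eq_bigr => i _; rewrite card_ord.
Qed.

Definition with_parents (W : {set T}) : {set T} :=
  W :|: [set vx (tag p) | p in [set p | vy p \in W]].

Lemma notin_with_parents (W : {set T}) v : v \notin xset ->
  (v \in with_parents W) = (v \in W).
Proof.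
move=> vNx; rewrite /with_parents in_setU.
by case: imsetP => [[p _ vE]|_]; [rewrite vE inE in vNx | rewrite orbF].
Qed.

Lemma with_parentsK (W : {set T}) : W \subset ~: xset -> with_parents W :\: xset = W.
Proof.
move=> Wx; apply/setP => v; rewrite in_setD.
case: (boolP (v \in xset)) => [vxs|/notin_with_parents ->] //=.
by apply/esym/negP => /(subsetP Wx); rewrite inE vxs.
Qed.

Lemma leafy_with_parents (W : {set T}) : W \subset ~: xset -> W != [set vz] ->
  leafy (with_parents W).
Proof.
move=> Wx Wz; apply/and3P; split.
- apply/forallP => p; apply/implyP; rewrite notin_with_parents ?xset_vy // => ypW.
  by rewrite /with_parents in_setU (imset_f (fun q => vx (tag q))) ?orbT // inE.
- apply/forallP => i; apply/implyP; rewrite in_setU => /orP[/(subsetP Wx)|].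
    by rewrite inE xset_vx.
  case/imsetP => p; rewrite inE => ypW [->]; apply/existsP; exists p.
  by rewrite eqxx notin_with_parents ?xset_vy.
- rewrite notin_with_parents ?xset_vz //; apply/implyP => zW.
  have [v vW vz'] : exists2 v, v \in W & v != vz.
    apply/exists_inP; apply: contraR Wz => /exists_inPn noz; apply/eqP/setP => v.
    by rewrite inE; apply/idP/eqP => [vW|->//]; apply/eqP/negPn/noz.
  case: (tvtxP v) vW vz' => [|i|p] vW // _; first by move: (subsetP Wx _ vW); rewrite inE xset_vx.
  apply/existsP; exists (tag p).
  by rewrite /with_parents in_setU (imset_f (fun q => vx (tag q))) ?orbT // inE.
Qed.

Lemma leafyK (U : {set T}) : leafy U -> with_parents (U :\: xset) = U.
Proof.
case/and3P => /forallP yU_xU /forallP xU_yU _; apply/setP => v.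
case: (boolP (v \in xset)) => [vxs|vxs]; last by rewrite notin_with_parents // in_setD vxs.
move: vxs; case: (tvtxP v) => [|i|p]; rewrite ?xset_vz ?xset_vy // => _.
rewrite in_setU in_setD xset_vx /=.
apply/imsetP/idP => [[p]|xiU]; first by rewrite !inE => /(implyP (yU_xU p)) + ->.
have /existsP[p /andP[/eqP <- ypU]] := implyP (xU_yU i) xiU.
by exists p; rewrite // !inE.
Qed.

Lemma leafy_not_z (U : {set T}) : leafy U -> U :\: xset != [set vz].
Proof.
case/and3P => _ /forallP xU_yU zU_xU; apply/negP => /eqP UzE.
have zU : vz \in U by have := set11 vz; rewrite -UzE in_setD => /andP[].
have /existsP[i xiU] := implyP zU_xU zU.
have /existsP[p /andP[_ ypU]] := implyP (xU_yU i) xiU.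
have : vy p \in U :\: xset by rewrite in_setD xset_vy ypU.
by rewrite UzE inE.
Qed.

Lemma card_leafy i :
  #|[set U | leafy U && (#|U :\: xset| == i)]| = 'C(l.+1, i) - (i == 1).
Proof.
rewrite -card_not_xset (_ : (i == 1) = (#|[set vz]| == i)); last by rewrite cards1 eq_sym.
rewrite -card_draws_setD1 ?sub1set ?inE ?xset_vz //.
have inj : {in [set U | leafy U && (#|U :\: xset| == i)] &, injective (fun U => U :\: xset)}.
  move=> U U'; rewrite !inE => /andP[lU _] /andP[lU' _] /= e.
  by rewrite -(leafyK lU) -(leafyK lU') e.
rewrite -(card_in_imset inj); apply: eq_card => W; apply/imsetP/idP.
  case=> U; rewrite inE => /andP[lU /eqP cU] ->.
  by rewrite !inE leafy_not_z // cU eqxx andbT setDE subsetIr.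
rewrite !inE => /and3P[Wz Wx /eqP cW]; exists (with_parents W) => //.
  by rewrite inE leafy_with_parents // with_parentsK // cW eqxx.
by rewrite with_parentsK.
Qed.

Lemma card_zstar i : #|[set U | zstar U && (#|U :\ vz| == i)]| = 'C(n, i) - (i == 0).
Proof.
rewrite -[X in 'C(X, i)]card_xset (_ : (i == 0) = (#|@set0 T| == i)); last first.
  by rewrite cards0 eq_sym.
rewrite -card_draws_setD1 ?sub0set //.
have inj : {in [set U | zstar U && (#|U :\ vz| == i)] &, injective (fun U => U :\ vz)}.
  move=> U U'; rewrite !inE => /andP[/and3P[zU _ _] _] /andP[/and3P[zU' _ _] _] /= e.
  by rewrite -(setD1K zU) -(setD1K zU') e.
rewrite -(card_in_imset inj); apply: eq_card => K; apply/imsetP/idP.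
  case=> U; rewrite inE => /andP[/and3P[zU /existsP[k xkU] /forallP noy] /eqP cU] ->.
  rewrite !inE cU eqxx andbT; apply/andP; split.
    by apply/set0Pn; exists (vx k); rewrite in_setD1 xkU.
  apply/subsetP => v; rewrite in_setD1; case: (tvtxP v) => [|k'|q] //; rewrite ?xset_vx //.
  by rewrite (negbTE (noy q)) andbF.
rewrite !inE => /and3P[/set0Pn[v vK] Kx /eqP cK].
have zK : vz \notin K by apply/negP => /(subsetP Kx); rewrite xset_vz.
exists (vz |: K); last by rewrite setU1K.
rewrite inE setU1K // cK eqxx andbT; apply/and3P; split; first exact: setU11.
  case: (tvtxP v) vK (subsetP Kx v vK) => [|k|q] vK; rewrite ?xset_vz ?xset_vy // => _.
  by apply/existsP; exists k; rewrite in_setU1 vK orbT.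
by apply/forallP => q; rewrite in_setU1 /=; apply/negP => /(subsetP Kx); rewrite xset_vy.
Qed.

Lemma betti_tree i :
  is_betti E F i ('C(l.+1, i) - (i == 1) + ('C(n, i) - (i == 0))).
Proof.
exists 1%N => N N1; rewrite betti_partial_setdeg // -card_leafy -card_zstar.
rewrite (eq_bigr _ (fun U _ => tor_dim_tree i U)) big_split /=.
by congr (_ + _); rewrite -sum1_card [RHS]big_mkcond; apply: eq_bigr => U _; rewrite inE.
Qed.

End Tree.

Theorem mainTheorem8 (F : fieldType) (n : nat) (a : 'I_n -> nat)
  (diam4 : exists i j : 'I_n, [/\ i != j, 0 < a i & 0 < a j]) :
  let l := (\sum_(i < n) a i)%N in
  [/\ is_betti (tree_edge a) F 0 1,
      is_betti (tree_edge a) F 1 (l + n),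
      (forall i, 1 < i -> is_betti (tree_edge a) F i ('C(l.+1, i) + 'C(n, i)))
    & is_projdim (tree_edge a) F (maxn l.+1 n)].
Proof.
move=> l; have betti i := betti_tree F a i.
have betti_gt1 i : 1 < i -> is_betti (tree_edge a) F i ('C(l.+1, i) + 'C(n, i)).
  by move=> i_gt1; move: (betti i); rewrite !gtn_eqF ?subn0 // ltnW.
have [i0 [_ [_ ai0 _]]] := diam4.
have l_gt0 : 0 < l by rewrite /l (bigD1 i0) //= ltn_addr.
have p_gt1 : 1 < maxn l.+1 n by rewrite (leq_trans _ (leq_maxl _ _)) // ltnS.
split => //.
- by move: (betti 0); rewrite !bin0.
- by move: (betti 1); rewrite !bin1 /= subn1 subn0.
split=> [|i lt_pi].
  exists ('C(l.+1, maxn l.+1 n) + 'C(n, maxn l.+1 n)); last exact: betti_gt1.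
  by case: (leqP n l.+1); rewrite binn ?addn1.
move: (betti_gt1 i (ltn_trans p_gt1 lt_pi)).
by rewrite !bin_small // (leq_ltn_trans _ lt_pi) // ?leq_maxl ?leq_maxr.
Qed.
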